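(* Let $p=2m\ge 4$ be even and let $U$ be the graph obtained from the cycle $C_p$ (vertices $v_1,\dots,v_p$) by attaching a single pendant vertex $u$ adjacent to $v_1$. Let $\tilde\Delta$ be the distance squared matrix of $C_p$ (equivalently, the principal submatrix of the distance squared matrix of $U$ indexed by $v_1,\dots,v_p$), and let $\mathbf x\in\mathbb R^p$ have entries $x_i=d_U(u,v_i)^2$. Then $\tilde\Delta$ is invertible and \[ \mathbf x^T\tilde\Delta^{-1}\mathbf x>0. \]
   Context: For a connected graph with vertices $1,\dots,n$, the distance squared matrix is the matrix with $(i,j)$ entry $d_{ij}^2$, where $d_{ij}$ is the graph distance between $i$ and $j$; $d_U$ denotes distance in $U$. *)

From HB Require Import structures.
From mathcomp Require Import all_boot all_order all_algebra.
Set Implicit Arguments. Unset Strict Implicit. Unset Printing Implicit Defensive.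
Import Order.TTheory GRing.Theory Num.Theory.

(* Shortest walks have < #|T| edges, so it
   suffices to search n in [0, #|T|); (#|T| is returned if y is unreachable,
   which never happens for the connected graphs used here). *)
Definition gdist (T : finType) (e : rel T) (x y : T) : nat :=
  find (fun n => [exists s : n.-tuple T, path e x s && (last x s == y)])
       (iota 0 #|T|).

(* The cycle C_p on vertices 'I_p (vertex i stands for v_{i+1}). *)
Definition cycle_rel (p : nat) : rel 'I_p :=
  fun i j => (i.+1 %% p == j) || (j.+1 %% p == i).

(* The unicyclic graph U: C_p plus a pendant vertex u (= None)
   adjacent to v_1 (= Some i with i = 0). *)
Definition U_rel (p : nat) : rel (option 'I_p) :=
  fun a b => match a, b with
             | Some i, Some j => cycle_rel i j
             | None, Some j => val j == 0%N
             | Some i, None => val i == 0%N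
             | None, None => false
             end.

Local Open Scope ring_scope.

Definition DeltaC (R : ringType) (p : nat) : 'M[R]_p :=
  \matrix_(i, j) ((gdist (@cycle_rel p) i j) ^ 2)%N%:R.

Definition xU (R : ringType) (p : nat) : 'cV[R]_p :=
  \col_i ((gdist (@U_rel p) None (Some i)) ^ 2)%N%:R.

Set Warnings "-notation-overridden,-ambiguous-paths,-deprecated".
From HB Require Import structures.
From mathcomp Require Import all_boot all_order all_algebra.
From mathcomp Require Import zify ring.
Import Order.TTheory GRing.Theory Num.Theory.
Set Implicit Arguments. Unset Strict Implicit. Unset Printing Implicit Defensive.

(* The distance squared matrix D of the cycle C_2m is circulant, with constant row sum s.
   Writing c' for the antipode of c, squared distances along the cycle have the second
   difference  d(i, c-1)^2 + d(i, c+1)^2 = 2 + 2 d(i, c)^2 - 4m [c = i'],  so the matrix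
   with entries (2/s - [k = j' - 1] - [k = j' + 1] + 2 [k = j']) / 4m is the inverse of D.
   Since d_U(u, v_i) = 1 + d(v_1, v_i) and d(v_i, v_1') = m - d(v_i, v_1), one checks that
   x = D y for  y = (1 + 1/m) e_(v_1) - (1/m) e_(v_1') + ((m + 1)/s) 1,  hence
   x^T D^-1 x = x^T y = (m + 1) (sum_i x_i - s) / s, which is positive because
   x_i = (d(v_1, v_i) + 1)^2 > d(v_1, v_i)^2. *)

Section Walks.

Variables (T : Type) (e : rel T).

Inductive walk : nat -> T -> T -> Prop :=
| walk0 x : walk 0 x x
| walkS n x y z : e x y -> walk n y z -> walk n.+1 x z.

Lemma walk_rcons n x y z : walk n x y -> e y z -> walk n.+1 x z.
Proof.
elim=> [a|k a b c eab _ IH] eyz; first exact: walkS eyz (walk0 _).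
exact: walkS eab (IH eyz).
Qed.

Lemma walk_sym n x y : symmetric e -> walk n x y -> walk n y x.
Proof.
move=> esym; elim=> [a|j a b c eab _ IH]; first exact: walk0.
by apply: walk_rcons IH _; rewrite esym.
Qed.

Lemma walk_path n x y : walk n x y ->
  exists s, [/\ size s = n, path e x s & last x s = y].
Proof.
elim=> [a|k a b c eab _ [s [<- ps ls]]]; first by exists [::].
by exists (b :: s); rewrite /= eab.
Qed.

Lemma path_lipschitz (phi : T -> nat) :
    (forall a b, e a b -> phi b <= (phi a).+1) ->
  forall s x, path e x s -> phi (last x s) <= phi x + size s.
Proof.
move=> phiL; elim=> [|a s IH] x /=; first by rewrite addn0.
by case/andP=> /phiL exa /IH; lia.
Qed.

End Walks.

Lemma walk_map (T T' : Type) (e : rel T) (e' : rel T') (f : T -> T') n x y :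
  walk e n x y -> {homo f : a b / e a b >-> e' a b} -> walk e' n (f x) (f y).
Proof.
move=> wxy fe; elim: wxy => [a|k a b c eab _ IH]; first exact: walk0.
exact: walkS (fe _ _ eab) IH.
Qed.

Lemma gdist_potential (T : finType) (e : rel T) (phi : T -> nat) x y n :
    n < #|T| -> walk e n x y -> phi x = 0 -> phi y = n ->
    (forall a b, e a b -> phi b <= (phi a).+1) ->
  gdist e x y = n.
Proof.
move=> ltnT wxy phix0 phiy phiL; rewrite /gdist.
rewrite -(subnKC (ltnW ltnT)) iotaD find_cat size_iota ifF; last first.
  apply/hasP=> -[k]; rewrite mem_iota => /andP[_ ltkn] /existsP[s /andP[ps /eqP ls]].
  by have := path_lipschitz phiL ps; rewrite ls phiy phix0 size_tuple; lia.
have [s [sz ps ls]] := walk_path wxy.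
have [r ->] : exists r, #|T| - n = r.+1 by exists (#|T| - n).-1; lia.
rewrite /= add0n.
suff -> : [exists s : n.-tuple T, path e x s && (last x s == y)] by rewrite addn0.
by apply/existsP; exists (Tuple (introT eqP sz)); rewrite /= ps ls eqxx.
Qed.

Definition cycle_dist (p i j : nat) : nat :=
  minn (maxn i j - minn i j) (p - (maxn i j - minn i j)).

Section Cycle.

Variable p : nat.
Implicit Types i j a b c : 'I_p.

Lemma cycle_dist_sym (i j : nat) : cycle_dist p i j = cycle_dist p j i.
Proof. by rewrite /cycle_dist (maxnC i) (minnC i). Qed.

Lemma val_ordS c :
  c.+1 < p /\ ordS c = c.+1 :> nat \/ c.+1 = p /\ ordS c = 0 :> nat.
Proof.
rewrite /=; case: (ltngtP c.+1 p) (ltn_ord c) => [lt_cp|lt_pc|eq_cp] lt_c.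
- by left; rewrite modn_small.
- lia.
- by right; rewrite eq_cp modnn.
Qed.

Lemma val_ord_pred c :
  0 < c /\ ord_pred c = c.-1 :> nat \/ c = 0 :> nat /\ ord_pred c = p.-1 :> nat.
Proof. by have := val_ordS (ord_pred c); rewrite ord_predK; lia. Qed.

Lemma val_iter_ordS k c : iter k (@ordS p) c = (c + k) %% p :> nat.
Proof.
elim: k => [|k IH]; first by rewrite addn0 modn_small.
by rewrite iterS /= IH -addn1 modnDml -addnA addn1 addnS.
Qed.

Lemma iter_ordS_reach i j : iter (p - i + j) (@ordS p) i = j.
Proof.
apply: val_inj; rewrite /= val_iter_ordS addnA subnKC 1?ltnW // addnC modnDr.
exact: modn_small.
Qed.

Lemma ordS_ind (P : 'I_p -> Prop) i :
  P i -> (forall j, P j -> P (ordS j)) -> forall j, P j.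
Proof.
move=> Pi PS j; rewrite -(iter_ordS_reach i j).
by elim: (p - i + j) => //= n IH; exact: PS.
Qed.

Lemma cycle_relE a b : cycle_rel a b = (ordS a == b) || (ordS b == a).
Proof. by []. Qed.

Lemma cycle_rel_sym : symmetric (@cycle_rel p).
Proof. by move=> a b; rewrite !cycle_relE orbC. Qed.

Lemma cycle_dist_ordS i j : cycle_dist p (ordS i) (ordS j) = cycle_dist p i j.
Proof. by have := val_ordS i; have := val_ordS j; have := ltn_ord i; rewrite /cycle_dist; lia. Qed.

Lemma cycle_dist_edge (i : nat) a b :
  i < p -> cycle_rel a b -> cycle_dist p i b <= (cycle_dist p i a).+1.
Proof.
rewrite cycle_relE => lt_ip /orP[] /eqP <-.
- by have := val_ordS a; have := ltn_ord a; rewrite /cycle_dist; lia.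
- by have := val_ordS b; have := ltn_ord b; rewrite /cycle_dist; lia.
Qed.

Lemma walk_iter_ordS k c : walk (@cycle_rel p) k c (iter k (@ordS p) c).
Proof.
elim: k => [|k IH]; first exact: walk0.
by apply: walk_rcons IH _; rewrite cycle_relE eqxx.
Qed.

Lemma walk_cycle_dist i j : walk (@cycle_rel p) (cycle_dist p i j) i j.
Proof.
wlog le_ij : i j / i <= j.
  move=> W; case: (leqP i j) => [/W //|/ltnW/W].
  by rewrite cycle_dist_sym; apply: walk_sym cycle_rel_sym.
have lt_jp := ltn_ord j.
case: (leqP (j - i) (p - (j - i))) => short.
- have -> : cycle_dist p i j = j - i by rewrite /cycle_dist; lia.
  suff E : iter (j - i) (@ordS p) i = j by rewrite -[X in walk _ _ _ X]E; exact: walk_iter_ordS.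
  by apply: val_inj; rewrite /= val_iter_ordS subnKC // modn_small.
- have -> : cycle_dist p i j = p - (j - i) by rewrite /cycle_dist; lia.
  apply: walk_sym cycle_rel_sym _.
  suff E : iter (p - (j - i)) (@ordS p) j = i by rewrite -[X in walk _ _ _ X]E; exact: walk_iter_ordS.
  apply: val_inj; rewrite /= val_iter_ordS.
  by rewrite (_ : j + _ = i + p); [rewrite modnDr modn_small | lia].
Qed.

Lemma gdist_cycle i j : gdist (@cycle_rel p) i j = cycle_dist p i j.
Proof.
apply: (gdist_potential (phi := fun k : 'I_p => cycle_dist p i k)) => //.
- by rewrite card_ord /cycle_dist; have := ltn_ord i; have := ltn_ord j; lia.
- exact: walk_cycle_dist.
- by rewrite /cycle_dist; lia.
- by move=> a b; apply: cycle_dist_edge.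
Qed.

Lemma gdist_pendant j : gdist (@U_rel p) None (Some j) = (cycle_dist p 0 j).+1.
Proof.
have p_gt0 : 0 < p by apply: leq_ltn_trans (ltn_ord j).
apply: (gdist_potential (phi := oapp (fun k : 'I_p => (cycle_dist p 0 k).+1) 0)) => //.
- by rewrite card_option card_ord /cycle_dist; have := ltn_ord j; lia.
- apply: (walkS (y := Some (Ordinal p_gt0))) => //.
  by refine (walk_map (walk_cycle_dist (Ordinal p_gt0) j) _).
- case=> [a|] [b|] //= eab.
  + by rewrite ltnS; apply: cycle_dist_edge eab.
  + by rewrite (eqP eab) /cycle_dist; lia.
Qed.

Lemma sum_circulant (V : nmodType) (F : 'I_p -> 'I_p -> V) :
    (forall i k, F (ordS i) (ordS k) = F i k) ->
  forall i j, (\sum_k F i k = \sum_k F j k)%R.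
Proof.
move=> FS i; apply: ordS_ind => // j ->.
by rewrite [RHS](reindex_inj (@ordS_inj p)); apply: eq_bigr => k _; rewrite FS.
Qed.

End Cycle.

Lemma sum_mul_eq (R : pzSemiRingType) n (F : 'I_n -> R) c :
  (\sum_k F k * (k == c)%:R = F c)%R.
Proof.
rewrite (bigD1 c) //= eqxx mulr1 big1 ?addr0 // => k /negbTE->.
by rewrite mulr0.
Qed.

Lemma sqrn_pred_succ d : 0 < d -> d.-1 ^ 2 + d.+1 ^ 2 = 2 + 2 * d ^ 2.
Proof. by case: d => // d _; rewrite /=; ring. Qed.

Lemma cycle_dist0 p (c : nat) : cycle_dist p 0 c = minn c (p - c).
Proof. by rewrite /cycle_dist max0n min0n subn0. Qed.

Section EvenCycle.

Variables (R : realFieldType) (m : nat).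
Hypothesis m_gt0 : 0 < m.
Local Notation p := (2 * m).
Implicit Types i j c : 'I_p.

Let p_gt0 : 0 < p. Proof. by rewrite muln_gt0. Qed.
Let v1 : 'I_p := Ordinal p_gt0.

Definition antipode c : 'I_p := iter m (@ordS p) c.

Lemma val_antipode c :
  c < m /\ antipode c = c + m :> nat \/ m <= c /\ antipode c = c - m :> nat.
Proof.
rewrite /antipode val_iter_ordS; have := ltn_ord c; case: (ltnP c m) => [lt_cm | ge_cm] lt_cp.
- by left; rewrite modn_small //; lia.
- by right; rewrite (_ : c + m = c - m + p) ?modnDr ?modn_small; lia.
Qed.

Lemma antipode_ordS c : antipode (ordS c) = ordS (antipode c).
Proof. by rewrite /antipode -iterSr iterS. Qed.

Lemma antipode_inj : injective antipode.
Proof.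
move=> i j /(congr1 (@nat_of_ord p)) eq_ij; apply: val_inj => /=.
by have := val_antipode i; have := val_antipode j; have := ltn_ord i; have := ltn_ord j; lia.
Qed.

Lemma cycle_dist_antipode (i : nat) j :
  i < p -> cycle_dist p i (antipode j) = m - cycle_dist p i j.
Proof. by have := val_antipode j; have := ltn_ord j; rewrite /cycle_dist; lia. Qed.

Lemma cycle_dist_second_difference_v1 c :
  cycle_dist p v1 (ord_pred c) ^ 2 + cycle_dist p v1 (ordS c) ^ 2
    + 4 * m * (c == antipode v1) = 2 + 2 * cycle_dist p v1 c ^ 2.
Proof.
have antipode_v1 : antipode v1 = m :> nat by have := val_antipode v1; rewrite /=; lia.
have -> : (c == antipode v1) = (c == m :> nat).
  by apply/eqP/eqP => [->|eq_cm] //; apply: val_inj; rewrite /= eq_cm antipode_v1.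
rewrite /= !cycle_dist0.
have := val_ordS c; have := val_ord_pred c; have := ltn_ord c.
set a := val (ord_pred c); set b := val (ordS c) => lt_cp ha hb.
case: (ltngtP c m) => [lt_cm | gt_cm | eq_cm]; rewrite ?muln0 ?addn0.
- have -> : minn b (p - b) = c.+1 by lia.
  have -> : minn c (p - c) = c by lia.
  case: (posnP c) => [c0 | c_gt0].
  + have -> : minn a (p - a) = 1 by lia.
    by rewrite c0.
  + have -> : minn a (p - a) = c.-1 by lia.
    exact: sqrn_pred_succ.
- have -> : minn a (p - a) = (p - c).+1 by lia.
  have -> : minn b (p - b) = (p - c).-1 by lia.
  have -> : minn c (p - c) = p - c by lia.
  by rewrite addnC sqrn_pred_succ //; lia.
- have -> : minn a (p - a) = m.-1 by lia.
  have -> : minn b (p - b) = m.-1 by lia.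
  have -> : minn c (p - c) = m by lia.
  by case: m m_gt0 {lt_cp ha hb eq_cm} => // n _ /=; ring.
Qed.

(* By circulant symmetry it suffices to check the identity at i = v1. *)
Lemma cycle_dist_second_difference i c :
  cycle_dist p i (ord_pred c) ^ 2 + cycle_dist p i (ordS c) ^ 2
    + 4 * m * (c == antipode i) = 2 + 2 * cycle_dist p i c ^ 2.
Proof.
move: i c; apply: (ordS_ind (i := v1)); first exact: cycle_dist_second_difference_v1.
move=> i IH c; have [c' ->] : exists c', c = ordS c' by exists (ord_pred c); rewrite ord_predK.
rewrite ordSK antipode_ordS (inj_eq (@ordS_inj _)) -{1}[c'](ord_predK c') !cycle_dist_ordS.
exact: IH.
Qed.

Lemma cycle_dist_le_half (i j : nat) : cycle_dist p i j <= m.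
Proof. by rewrite /cycle_dist; lia. Qed.

Local Open Scope ring_scope.

Lemma DeltaCE i j : DeltaC R p i j = (cycle_dist p i j ^ 2)%N%:R.
Proof. by rewrite mxE gdist_cycle. Qed.

Lemma xUE i k : xU R p i k = ((cycle_dist p 0 i).+1 ^ 2)%N%:R.
Proof. by rewrite mxE gdist_pendant. Qed.

Definition sum_sq_dist : R := \sum_(k < p) (cycle_dist p v1 k ^ 2)%N%:R.

Lemma sum_DeltaC_row i : \sum_k DeltaC R p i k = sum_sq_dist.
Proof.
under eq_bigr do rewrite DeltaCE.
rewrite /sum_sq_dist; apply: (sum_circulant (F := fun i k => (cycle_dist p i k ^ 2)%N%:R)).
by move=> {}i k; rewrite cycle_dist_ordS.
Qed.

Lemma sum_sq_dist_gt0 : 0 < sum_sq_dist.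
Proof.
rewrite /sum_sq_dist (bigD1 (antipode v1)) //= cycle_dist_antipode //.
rewrite /cycle_dist subnn min0n subn0 ltr_wpDr ?sumr_ge0 // ltr0n.
by rewrite expn_gt0 m_gt0.
Qed.

Let sum_sq_dist_neq0 : sum_sq_dist != 0. Proof. by rewrite gt_eqF ?sum_sq_dist_gt0. Qed.
Let natr_m_neq0 : m%:R != 0 :> R. Proof. by rewrite pnatr_eq0 -lt0n. Qed.

Definition DeltaC_inv : 'M[R]_p := \matrix_(k, j)
  ((2 / sum_sq_dist - (k == ord_pred (antipode j))%:R - (k == ordS (antipode j))%:R
    + 2 * (k == antipode j)%:R) / (4 * m)%:R).

Lemma mulmx_DeltaC_inv : DeltaC R p *m DeltaC_inv = 1%:M.
Proof.
apply/matrixP => i j; rewrite !mxE.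
set a := antipode j.
have second_diff : (cycle_dist p i (ord_pred a))%:R ^+ 2 + (cycle_dist p i (ordS a))%:R ^+ 2
    + 4 * m%:R * (j == i)%:R = 2 + 2 * (cycle_dist p i a)%:R ^+ 2 :> R.
  by rewrite -!natrX -!natrM -!natrD -(inj_eq antipode_inj) cycle_dist_second_difference.
under eq_bigr => k _ do rewrite [DeltaC_inv k j]mxE.
have E k : DeltaC R p i k * ((2 / sum_sq_dist - (k == ord_pred a)%:R - (k == ordS a)%:R
                                + 2 * (k == a)%:R) / (4 * m)%:R)
  = (DeltaC R p i k * (2 / sum_sq_dist) - DeltaC R p i k * (k == ord_pred a)%:R
     - DeltaC R p i k * (k == ordS a)%:R + 2 * (DeltaC R p i k * (k == a)%:R)) / (4 * m)%:R.
  by ring.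
rewrite (eq_bigr _ (fun k _ => E k)) -mulr_suml big_split /= !sumrB -mulr_suml -mulr_sumr.
rewrite !sum_mul_eq sum_DeltaC_row !DeltaCE !natrX eq_sym natrM.
set A := (cycle_dist p i (ord_pred a))%:R in second_diff *.
have -> : A ^+ 2 = 2 + 2 * (cycle_dist p i a)%:R ^+ 2 - 4 * m%:R * (j == i)%:R
                   - (cycle_dist p i (ordS a))%:R ^+ 2.
  by rewrite -second_diff; ring.
by field; rewrite sum_sq_dist_neq0 natr_m_neq0.
Qed.

Lemma DeltaC_unit : DeltaC R p \in unitmx.
Proof. exact: (mulmx1_unit mulmx_DeltaC_inv).1. Qed.

Definition yU : 'cV[R]_p := \col_k
  ((1 + m%:R^-1) * (k == v1)%:R - m%:R^-1 * (k == antipode v1)%:R + m.+1%:R / sum_sq_dist).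

Lemma sum_mul_yU (F : 'I_p -> R) (j : 'I_1) :
  \sum_k F k * yU k j =
  (1 + m%:R^-1) * F v1 - m%:R^-1 * F (antipode v1) + m.+1%:R / sum_sq_dist * \sum_k F k.
Proof.
under eq_bigr => k _ do rewrite mxE.
have E k : F k * ((1 + m%:R^-1) * (k == v1)%:R - m%:R^-1 * (k == antipode v1)%:R
                  + m.+1%:R / sum_sq_dist)
  = (1 + m%:R^-1) * (F k * (k == v1)%:R) - m%:R^-1 * (F k * (k == antipode v1)%:R)
    + m.+1%:R / sum_sq_dist * F k.
  by ring.
rewrite (eq_bigr _ (fun k _ => E k)) big_split /= sumrB -!mulr_sumr.
by rewrite !sum_mul_eq.
Qed.

Lemma mulmx_DeltaC_yU : DeltaC R p *m yU = xU R p.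
Proof.
apply/matrixP => i j; rewrite xUE mxE sum_mul_yU sum_DeltaC_row !DeltaCE.
rewrite cycle_dist_antipode // (cycle_dist_sym _ i).
set d := cycle_dist p 0 i.
rewrite !natrX natrB ?cycle_dist_le_half // -!natr1.
by field; rewrite sum_sq_dist_neq0 natr_m_neq0.
Qed.

Lemma sum_sq_dist_lt_sum_xU : sum_sq_dist < \sum_k xU R p k ord0.
Proof.
apply: ltr_sum => [|k _]; first by apply/hasP; exists v1; rewrite ?mem_index_enum.
by rewrite xUE ltr_nat ltn_exp2r.
Qed.

Lemma xU_tr_mul_yU :
  ((xU R p)^T *m yU) ord0 ord0
  = m.+1%:R * (\sum_k xU R p k ord0 - sum_sq_dist) / sum_sq_dist.
Proof.
rewrite mxE; under eq_bigr do rewrite mxE.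
rewrite sum_mul_yU [xU _ _ v1 _]xUE [xU _ _ (antipode v1) _]xUE cycle_dist_antipode //.
rewrite /cycle_dist subnn min0n subn0 natrX -natr1.
by field; rewrite sum_sq_dist_neq0 natr_m_neq0.
Qed.

Lemma xU_tr_mul_yU_gt0 : 0 < ((xU R p)^T *m yU) ord0 ord0.
Proof.
rewrite xU_tr_mul_yU divr_gt0 ?sum_sq_dist_gt0 // mulr_gt0 ?ltr0n //.
by rewrite subr_gt0 sum_sq_dist_lt_sum_xU.
Qed.

End EvenCycle.

Local Open Scope ring_scope.
Unset Implicit Arguments.

Theorem lemma6p2 (R : realFieldType) (m : nat) (hm : (2 <= m)%N) :
  DeltaC R (2 * m) \in unitmx /\
  0 < ((xU R (2 * m))^T *m invmx (DeltaC R (2 * m)) *m xU R (2 * m)) ord0 ord0.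
Proof.
have m_gt0 : (0 < m)%N by apply: leq_trans hm.
have Delta_unit := DeltaC_unit R m_gt0.
split=> //.
rewrite -mulmxA -[X in invmx _ *m X](mulmx_DeltaC_yU R m_gt0) mulKmx //.
exact: xU_tr_mul_yU_gt0.
Qed.
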